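(* Let $p\in\{1,2\}$ and assume the measures $\mu^1,\dots,\mu^N$ are not all equal. Let $\pi^{ij}$ ($1\le i,j\le N$) be the plans of the pairwise algorithm, let $m^i_k\in\mathbb{R}^d$ ($i=1,\dots,N$, $k=1,\dots,n_i$) be arbitrary points, and let $\tilde\nu\coloneqq\sum_{i=1}^N\lambda_i\sum_{k=1}^{n_i}\mu^i_k\delta(m^i_k)$. Then for any optimal barycenter $\hat\nu$ (minimizer of $\Psi_p$), $$\frac{\Psi_p(\tilde\nu)}{\Psi_p(\hat\nu)}\le\frac{\sum_{i=1}^N\lambda_i\sum_{j=1}^N\lambda_j\sum_{k=1}^{n_i}\sum_{l=1}^{n_j}\pi^{ij}_{k,l}\|m^i_k-x^j_l\|^p}{\sum_{1\le i<j\le N}\lambda_i\lambda_j\mathcal{W}_p^p(\mu^i,\mu^j)}.$$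
   Context: $\|\cdot\|$ is the Euclidean norm on $\mathbb{R}^d$. For finitely supported probability measures $\mu,\nu$ on $\mathbb{R}^d$, $\mathcal{W}_p^p(\mu,\nu)\coloneqq\min_{\pi\in\Pi(\mu,\nu)}\int\|x-y\|^p\,d\pi$, with $\Pi(\mu,\nu)$ the set of couplings. Fix $N\ge2$, $\lambda\in\Delta_N\coloneqq\{\lambda\in(0,1)^N:\sum_i\lambda_i=1\}$, and discrete probability measures $\mu^i=\sum_{l=1}^{n_i}\mu^i_l\delta(x^i_l)$, $i=1,\dots,N$, with positive weights and pairwise distinct points for each $i$. $\Psi_p(\nu)\coloneqq\sum_{i=1}^N\lambda_i\mathcal{W}_p^p(\nu,\mu^i)$. Plans of the pairwise algorithm: $\pi^{ii}\coloneqq\sum_k\mu^i_k\delta(x^i_k,x^i_k)$ (so $\pi^{ii}_{k,l}=\mu^i_k$ if $l=k$, else $0$); for $i<j$, $\pi^{ij}=\sum_{k,l}\pi^{ij}_{k,l}\delta(x^i_k,x^j_l)\in\Pi(\mu^i,\mu^j)$ is an optimal plan for cost $\|x-y\|^p$; and $\pi^{ji}_{l,k}\coloneqq\pi^{ij}_{k,l}$. *)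

From HB Require Import structures.
From mathcomp Require Import all_boot all_order all_algebra.
From mathcomp Require Import boolp classical_sets reals.
Set Implicit Arguments. Unset Strict Implicit. Unset Printing Implicit Defensive.
Import Order.TTheory GRing.Theory Num.Theory.
Local Open Scope ring_scope.
Local Open Scope classical_set_scope.

Definition enorm {R : realType} {d : nat} (v : 'rV[R]_d) : R :=
  Num.sqrt (\sum_(i < d) (v ord0 i) ^+ 2).

(* A finitely supported measure on R^d, given by a finite index type,
   weights and atoms:  sum_{k : dI} dw k * delta(dx k). *)
Record dmeas (R : realType) (d : nat) := DMeas {
  dI : finType;
  dw : dI -> R;
  dx : dI -> 'rV[R]_d }.
Arguments DMeas {R d} dI dw dx.
Arguments dI {R d} _.
Arguments dw {R d} _ _.
Arguments dx {R d} _ _.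

Definition is_prob {R : realType} {d : nat} (nu : dmeas R d) : Prop :=
  (forall k, 0 <= dw nu k) /\ \sum_(k : dI nu) dw nu k = 1.

Definition mass {R : realType} {d : nat} (nu : dmeas R d) (y : 'rV[R]_d) : R :=
  \sum_(k : dI nu | dx nu k == y) dw nu k.

Definition meas_eq {R : realType} {d : nat} (mu nu : dmeas R d) : Prop :=
  forall y, mass mu y = mass nu y.

Definition coupling {R : realType} {d : nat} (mu nu : dmeas R d)
  (pi : dI mu -> dI nu -> R) : Prop :=
  (forall k l, 0 <= pi k l) /\
  (forall k, \sum_(l : dI nu) pi k l = dw mu k) /\
  (forall l, \sum_(k : dI mu) pi k l = dw nu l).

Definition tcost {R : realType} {d : nat} (p : nat) (mu nu : dmeas R d)
  (pi : dI mu -> dI nu -> R) : R :=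
  \sum_(k : dI mu) \sum_(l : dI nu) pi k l * enorm (dx mu k - dx nu l) ^+ p.

(* W_p^p(mu, nu) = min over couplings of the transport cost (written as the
   infimum, which is attained) *)
Definition Wpp {R : realType} {d : nat} (p : nat) (mu nu : dmeas R d) : R :=
  inf [set c | exists pi : dI mu -> dI nu -> R, coupling pi /\ c = tcost p pi].

Definition Psi {R : realType} {d N : nat} (p : nat) (lam : 'I_N -> R)
  (mus : 'I_N -> dmeas R d) (nu : dmeas R d) : R :=
  \sum_(i < N) lam i * Wpp p nu (mus i).

Definition mkmu {R : realType} {d N : nat} (n : 'I_N -> nat)
  (w : forall i, 'I_(n i) -> R) (x : forall i, 'I_(n i) -> 'rV[R]_d)
  (i : 'I_N) : dmeas R d :=
  DMeas 'I_(n i) (w i) (x i).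

Definition mixmeas {R : realType} {d N : nat} (lam : 'I_N -> R) (n : 'I_N -> nat)
  (w : forall i, 'I_(n i) -> R) (m : forall i, 'I_(n i) -> 'rV[R]_d) : dmeas R d :=
  DMeas {i : 'I_N & 'I_(n i)}
    (fun t => lam (tag t) * w (tag t) (tagged t))
    (fun t => m (tag t) (tagged t)).

(* Sending the atom m^i_k of the mixture to mu^j along lambda_i pi^{ij} is a
   coupling of the mixture with mu^j, which bounds Psi_p of the mixture by the
   numerator.  For the denominator, take any probability nu and near-optimal
   plans gamma_i in Pi(nu, mu^i); gluing gamma_i and gamma_j along nu gives a
   plan in Pi(mu^i, mu^j).  For p in {1, 2} and nonnegative weights beta,
     sum_{s,t} beta_s beta_t |b_s - b_t|^p <= 2 (sum beta) sum_s beta_s |y - b_s|^p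
   (the triangle inequality for p = 1, the variance identity for p = 2), and
   applied at every atom of nu this yields
     sum_{i<j} lambda_i lambda_j W_p^p(mu^i, mu^j) <= Psi_p(nu).  The denominator is positive
   because a zero-cost plan only moves mass between equal points. *)

From HB Require Import structures.
From mathcomp Require Import all_boot all_order all_algebra.
From mathcomp Require Import boolp classical_sets reals.
From mathcomp Require Import ring lra.
Import Order.TTheory GRing.Theory Num.Theory.
Local Open Scope ring_scope.

Section DoubleSum.
Context {R : comPzRingType} {T : finType}.

(* The common shape of the Lagrange identity and of the variance identity. *)
Lemma sum_pairs_lagrange (f g h : T -> R) :
  \sum_s \sum_t (f s * g t + f t * g s - 2 * (h s * h t)) =
  2 * ((\sum_s f s) * (\sum_s g s) - (\sum_s h s) ^+ 2).
Proof.
have fg : \sum_s \sum_t f s * g t = (\sum_s f s) * (\sum_s g s).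
  by rewrite mulr_suml; apply: eq_bigr => s _; rewrite mulr_sumr.
have hh : \sum_s \sum_t h s * h t = (\sum_s h s) ^+ 2.
  by rewrite expr2 mulr_suml; apply: eq_bigr => s _; rewrite mulr_sumr.
have gf : \sum_s \sum_t f t * g s = (\sum_s f s) * (\sum_s g s).
  by rewrite exchange_big.
transitivity (\sum_s \sum_t f s * g t + \sum_s \sum_t f t * g s
               - 2 * \sum_s \sum_t h s * h t).
  rewrite mulr_sumr -big_split -sumrB; apply: eq_bigr => s _.
  by rewrite mulr_sumr -big_split -sumrB.
rewrite fg gf hh; ring.
Qed.
End DoubleSum.

Section EuclideanNorm.
Context {R : realType} {d : nat}.
Implicit Types u v : 'rV[R]_d.

Lemma enorm_ge0 v : 0 <= enorm v.
Proof. exact: sqrtr_ge0. Qed.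

Lemma enorm_sqr v : enorm v ^+ 2 = \sum_(c < d) v ord0 c ^+ 2.
Proof. by rewrite sqr_sqrtr // sumr_ge0 // => c _; exact: sqr_ge0. Qed.

Lemma enormN v : enorm (- v) = enorm v.
Proof. by rewrite /enorm; congr Num.sqrt; apply: eq_bigr => c _; rewrite mxE sqrrN. Qed.

Lemma enormB u v : enorm (u - v) = enorm (v - u).
Proof. by rewrite -enormN opprB. Qed.

Lemma enorm_eq0 v : (enorm v == 0) = (v == 0).
Proof.
apply/idP/eqP => [|->]; last by rewrite /enorm big1 ?sqrtr0 // => c _; rewrite mxE expr0n.
rewrite sqrtr_eq0 => sum_le0.
have sum0 : \sum_(c < d) v ord0 c ^+ 2 = 0.
  by apply/eqP; rewrite eq_le sum_le0 sumr_ge0 // => c _; exact: sqr_ge0.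
apply/rowP => c; rewrite mxE; apply/eqP; rewrite -sqrf_eq0; apply/eqP.
exact: (psumr_eq0P (fun c _ => sqr_ge0 (v ord0 c)) sum0).
Qed.

Lemma cauchy_schwarz u v : \sum_(c < d) u ord0 c * v ord0 c <= enorm u * enorm v.
Proof.
have := sum_pairs_lagrange (fun c => u ord0 c ^+ 2) (fun c => v ord0 c ^+ 2)
  (fun c => u ord0 c * v ord0 c).
rewrite -!enorm_sqr => lagrange.
have : 0 <= \sum_c \sum_c' (u ord0 c * v ord0 c' - u ord0 c' * v ord0 c) ^+ 2 :> R.
  by apply: sumr_ge0 => c _; apply: sumr_ge0 => c' _; exact: sqr_ge0.
have -> : \sum_c \sum_c' (u ord0 c * v ord0 c' - u ord0 c' * v ord0 c) ^+ 2 =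
  \sum_c \sum_c' (u ord0 c ^+ 2 * v ord0 c' ^+ 2 + u ord0 c' ^+ 2 * v ord0 c ^+ 2
                  - 2 * (u ord0 c * v ord0 c * (u ord0 c' * v ord0 c'))) :> R.
  by apply: eq_bigr => c _; apply: eq_bigr => c' _; ring.
rewrite {}lagrange => sq_le.
rewrite (le_trans (ler_norm _)) // -(@ler_pXn2r _ 2) ?nnegrE ?mulr_ge0 ?enorm_ge0 //.
rewrite real_normK ?num_real // exprMn; lra.
Qed.

Lemma enormD u v : enorm (u + v) <= enorm u + enorm v.
Proof.
rewrite -(@ler_pXn2r _ 2) ?nnegrE ?addr_ge0 ?enorm_ge0 //.
have -> : enorm (u + v) ^+ 2 =
    enorm u ^+ 2 + enorm v ^+ 2 + 2 * \sum_(c < d) u ord0 c * v ord0 c.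
  rewrite !enorm_sqr mulr_sumr -!big_split /=.
  by apply: eq_bigr => c _; rewrite mxE; ring.
have := cauchy_schwarz u v; rewrite sqrrD; lra.
Qed.
End EuclideanNorm.

Section PairwiseDistances.
Context {R : realType} {d : nat} {T : finType}.
Variables (be : T -> R) (b : T -> 'rV[R]_d) (y : 'rV[R]_d).
Hypothesis be_ge0 : forall s, 0 <= be s.

Lemma sum_pairs_dist_le :
  \sum_s \sum_t be s * be t * enorm (b s - b t) <=
  2 * (\sum_s be s) * \sum_s be s * enorm (y - b s).
Proof.
pose a s := enorm (y - b s).
apply: (@le_trans _ _ (\sum_s \sum_t (be s * (be t * a t) + be t * (be s * a s)
                                      - 2 * ((0 : R) * 0)))).
  apply: ler_sum => s _; apply: ler_sum => t _.
  have tri : enorm (b s - b t) <= a s + a t.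
    have -> : b s - b t = (b s - y) + (y - b t) by rewrite addrA subrK.
    by rewrite (le_trans (enormD _ _)) // enormB.
  rewrite mul0r mulr0 subr0 [leRHS](_ : _ = be s * be t * (a s + a t)); last by ring.
  by rewrite ler_wpM2l ?mulr_ge0.
rewrite sum_pairs_lagrange big1_eq expr0n /= subr0; lra.
Qed.

Lemma sum_pairs_dist_sqr_le :
  \sum_s \sum_t be s * be t * enorm (b s - b t) ^+ 2 <=
  2 * (\sum_s be s) * \sum_s be s * enorm (y - b s) ^+ 2.
Proof.
pose u c s := y ord0 c - b s ord0 c.
have -> : \sum_s \sum_t be s * be t * enorm (b s - b t) ^+ 2 =
    \sum_(c < d) \sum_s \sum_t (be s * (be t * u c t ^+ 2) + be t * (be s * u c s ^+ 2)
                                - 2 * (be s * u c s * (be t * u c t))).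
  rewrite [RHS]exchange_big; apply: eq_bigr => s _.
  rewrite [RHS]exchange_big; apply: eq_bigr => t _.
  rewrite enorm_sqr mulr_sumr; apply: eq_bigr => c _; rewrite /u !mxE; ring.
have -> : \sum_s be s * enorm (y - b s) ^+ 2 = \sum_(c < d) \sum_s be s * u c s ^+ 2.
  rewrite [RHS]exchange_big; apply: eq_bigr => s _.
  by rewrite enorm_sqr mulr_sumr; apply: eq_bigr => c _; rewrite /u !mxE.
rewrite mulr_sumr; apply: ler_sum => c _; rewrite sum_pairs_lagrange.
have := sqr_ge0 (\sum_s be s * u c s); lra.
Qed.

Lemma sum_pairs_distX_le p : (p == 1)%N || (p == 2)%N ->
  \sum_s \sum_t be s * be t * enorm (b s - b t) ^+ p <=
  2 * (\sum_s be s) * \sum_s be s * enorm (y - b s) ^+ p.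
Proof.
case/orP => /eqP ->; last exact: sum_pairs_dist_sqr_le.
under eq_bigr do under eq_bigr do rewrite expr1.
under [X in _ <= _ * X]eq_bigr do rewrite expr1.
exact: sum_pairs_dist_le.
Qed.

End PairwiseDistances.

Section Transport.
Context {R : realType} {d : nat} (p : nat).
Implicit Types mu nu : dmeas R d.

Lemma tcost_ge0 mu nu (pi : dI mu -> dI nu -> R) : coupling pi -> 0 <= tcost p pi.
Proof.
move=> [pi_ge0 _]; apply: sumr_ge0 => k _; apply: sumr_ge0 => l _.
by rewrite mulr_ge0 ?exprn_ge0 ?enorm_ge0.
Qed.

Lemma Wpp_ge0 mu nu : 0 <= Wpp p mu nu.
Proof.
rewrite /Wpp; set E := (X in inf X).
have [->|/set0P neE] := eqVneq E set0; first by rewrite inf0.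
by apply: lb_le_inf => // _ [pi [hpi ->]]; exact: tcost_ge0.
Qed.

Lemma Wpp_le mu nu (pi : dI mu -> dI nu -> R) : coupling pi -> Wpp p mu nu <= tcost p pi.
Proof.
move=> hpi; apply: ge_inf; last by exists pi.
by exists 0 => _ [pi' [hpi' ->]]; exact: tcost_ge0.
Qed.

Lemma coupling_prod mu nu :
  is_prob mu -> is_prob nu -> coupling (fun k l => dw mu k * dw nu l).
Proof.
move=> [mu_ge0 mu1] [nu_ge0 nu1]; split; last split.
- by move=> k l; rewrite mulr_ge0.
- by move=> k; rewrite -mulr_sumr nu1 mulr1.
- by move=> l; rewrite -mulr_suml mu1 mul1r.
Qed.

Lemma Wpp_approx mu nu e : is_prob mu -> is_prob nu -> 0 < e ->
  exists pi : dI mu -> dI nu -> R, coupling pi /\ tcost p pi <= Wpp p mu nu + e.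
Proof.
move=> hmu hnu e_gt0.
have hE : has_inf [set c | exists pi : dI mu -> dI nu -> R, coupling pi /\ c = tcost p pi].
  split; last by exists 0 => _ [pi [hpi ->]]; exact: tcost_ge0.
  exists (tcost p (fun k l => dw mu k * dw nu l)), (fun k l => dw mu k * dw nu l).
  by split; first exact: coupling_prod.
have [_ [pi [hpi ->]] lt_pi] := inf_adherent e_gt0 hE.
by exists pi; split => //; exact: ltW.
Qed.

Lemma coupling_tr mu nu (pi : dI mu -> dI nu -> R) :
  coupling pi -> coupling (fun l k => pi k l).
Proof. by move=> [pi_ge0 [row col]]; split. Qed.

Lemma tcost_tr mu nu (pi : dI mu -> dI nu -> R) :
  tcost p (fun l k => pi k l) = tcost p pi.
Proof.
rewrite /tcost exchange_big; apply: eq_bigr => k _; apply: eq_bigr => l _.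
by rewrite enormB.
Qed.

Lemma WppC mu nu : Wpp p mu nu = Wpp p nu mu.
Proof.
rewrite /Wpp; congr inf; apply/seteqP; split => _ [pi [hpi ->]];
  by exists (fun l k => pi k l); rewrite tcost_tr; split => //; exact: coupling_tr.
Qed.

Lemma coupling_diag mu : (forall k, 0 <= dw mu k) ->
  coupling (fun k l : dI mu => if k == l then dw mu k else 0).
Proof.
move=> mu_ge0; split; last split.
- by move=> k l; case: eqP.
- move=> k; rewrite (bigD1 k) //= eqxx big1 ?addr0 // => l.
  by rewrite eq_sym => /negbTE ->.
- by move=> l; rewrite (bigD1 l) //= eqxx big1 ?addr0 // => k /negbTE ->.
Qed.

Lemma tcost_eq0_meas_eq mu nu (pi : dI mu -> dI nu -> R) :
  coupling pi -> tcost p pi = 0 -> meas_eq mu nu.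
Proof.
move=> [pi_ge0 [row col]] cost0 y.
have term_ge0 k l : 0 <= pi k l * enorm (dx mu k - dx nu l) ^+ p.
  by rewrite mulr_ge0 ?exprn_ge0 ?enorm_ge0.
have supp k l : pi k l != 0 -> dx mu k = dx nu l.
  move=> pi_neq0; apply/eqP; rewrite -subr_eq0 -enorm_eq0.
  have row_ge0 k' : true -> 0 <= \sum_l pi k' l * enorm (dx mu k' - dx nu l) ^+ p.
    by move=> _; apply: sumr_ge0 => l' _.
  have row0 := psumr_eq0P row_ge0 cost0 (i := k) isT.
  move: (psumr_eq0P (fun l _ => term_ge0 k l) row0 (i := l) isT) => /eqP.
  by rewrite mulf_eq0 (negbTE pi_neq0) expf_eq0 => /andP[].
rewrite /mass.
transitivity (\sum_k \sum_l (if dx mu k == y then pi k l else 0)).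
  rewrite big_mkcond; apply: eq_bigr => k _.
  by case: ifP => _; [rewrite row | rewrite big1].
transitivity (\sum_l \sum_k (if dx nu l == y then pi k l else 0)).
  rewrite exchange_big; apply: eq_bigr => l _; apply: eq_bigr => k _.
  by have [->|/supp ->] := eqVneq (pi k l) 0; rewrite ?if_same.
rewrite [RHS]big_mkcond; apply: eq_bigr => l _.
by case: ifP => _; [rewrite col | rewrite big1].
Qed.
End Transport.

Lemma sum_tagged {R : nmodType} {I : finType} {J : I -> finType} (F : forall i, J i -> R) :
  \sum_(t : {i : I & J i}) F (tag t) (tagged t) = \sum_i \sum_(k : J i) F i k.
Proof. exact: esym (sig_big_dep xpredT (fun _ => xpredT) F). Qed.

(* [(g1 ∘ g2)(k, l) = Σ_z g1(z, k) g2(z, l) / ν(z)]; the junk value [x / 0 = 0]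
   is harmless since the rows of a coupling over a null atom of [ν] vanish. *)
Definition glue {R : realType} {d : nat} {nu mu1 mu2 : dmeas R d}
    (g1 : dI nu -> dI mu1 -> R) (g2 : dI nu -> dI mu2 -> R) : dI mu1 -> dI mu2 -> R :=
  fun k l => \sum_z g1 z k * g2 z l / dw nu z.

Section Gluing.
Context {R : realType} {d : nat}.
Implicit Types mu nu : dmeas R d.

Lemma coupling_mulrK {mu nu} {g : dI nu -> dI mu -> R} :
  coupling g -> forall z k, g z k * dw nu z / dw nu z = g z k.
Proof.
move=> [g_ge0 [row _]] z k; have [nu0|nu_neq0] := eqVneq (dw nu z) 0; last by rewrite mulfK.
have row0 : \sum_k' g z k' = 0 by rewrite row.
by rewrite (psumr_eq0P (fun k' _ => g_ge0 z k') row0 (i := k) isT) !mul0r.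
Qed.

Lemma glue_coupling nu mu1 mu2 (g1 : dI nu -> dI mu1 -> R) (g2 : dI nu -> dI mu2 -> R) :
  coupling g1 -> coupling g2 -> coupling (glue g1 g2).
Proof.
move=> hg1 hg2; have [g1_ge0 [row1 col1]] := hg1; have [g2_ge0 [row2 col2]] := hg2.
split; last split.
- by move=> k l; apply: sumr_ge0 => z _; rewrite divr_ge0 ?mulr_ge0 // -row1 sumr_ge0.
- move=> k; rewrite /glue exchange_big -col1; apply: eq_bigr => z _.
  by rewrite -mulr_suml -mulr_sumr row2 (coupling_mulrK hg1).
- move=> l; rewrite /glue exchange_big -col2; apply: eq_bigr => z _.
  by rewrite -mulr_suml -mulr_suml row1 [dw nu z * _]mulrC (coupling_mulrK hg2).
Qed.

End Gluing.

Section GluedCost.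
Context {R : realType} {d : nat} {I : finType}.
Context {p : nat} {lam : I -> R} {mus : I -> dmeas R d} {nu : dmeas R d}.
Context {g : forall i, dI nu -> dI (mus i) -> R}.
Hypotheses (hp : (p == 1)%N || (p == 2)%N) (lam_ge0 : forall i, 0 <= lam i)
  (lam_sum1 : \sum_i lam i = 1) (g_coupling : forall i, coupling (g i)).

Let beta z i k := lam i * g i z k.

Let S2 z := \sum_i \sum_k \sum_j \sum_l
  beta z i k * beta z j l * enorm (dx (mus i) k - dx (mus j) l) ^+ p.

Let S1 z := \sum_i \sum_k beta z i k * enorm (dx nu z - dx (mus i) k) ^+ p.

Lemma sum_tcost_glueE :
  \sum_i \sum_j lam i * lam j * tcost p (glue (g i) (g j)) = \sum_z (dw nu z)^-1 * S2 z.
Proof.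
have distr z : (dw nu z)^-1 * S2 z = \sum_i \sum_k \sum_j \sum_l (dw nu z)^-1 *
    (beta z i k * beta z j l * enorm (dx (mus i) k - dx (mus j) l) ^+ p).
  rewrite mulr_sumr; apply: eq_bigr => i _; rewrite mulr_sumr; apply: eq_bigr => k _.
  by rewrite mulr_sumr; apply: eq_bigr => j _; rewrite mulr_sumr.
under [RHS]eq_bigr do rewrite distr.
rewrite [RHS]exchange_big; apply: eq_bigr => i _.
rewrite [RHS]exchange_big /=.
under [RHS]eq_bigr => k _ do rewrite exchange_big /=.
rewrite [RHS]exchange_big /=; apply: eq_bigr => j _.
rewrite /tcost /glue mulr_sumr; apply: eq_bigr => k _.
rewrite [RHS]exchange_big /= mulr_sumr; apply: eq_bigr => l _.
rewrite mulr_suml mulr_sumr; apply: eq_bigr => z _.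
rewrite /beta; ring.
Qed.

Lemma sum_tcostE : \sum_i lam i * tcost p (g i) = \sum_z S1 z.
Proof.
rewrite [RHS]exchange_big; apply: eq_bigr => i _; rewrite /tcost mulr_sumr.
by apply: eq_bigr => z _; rewrite mulr_sumr; apply: eq_bigr => k _; rewrite mulrA.
Qed.

Lemma sum_tcost_glue_le :
  \sum_i \sum_j lam i * lam j * tcost p (glue (g i) (g j)) <=
  2 * \sum_i lam i * tcost p (g i).
Proof.
have beta_ge0 z i k : 0 <= beta z i k.
  by rewrite mulr_ge0 //; have [g_ge0 _] := g_coupling i.
have sum_beta z : \sum_i \sum_k beta z i k = dw nu z.
  transitivity (\sum_i lam i * dw nu z); last by rewrite -mulr_suml lam_sum1 mul1r.
  by apply: eq_bigr => i _; rewrite -mulr_sumr; have [_ [-> _]] := g_coupling i.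
rewrite sum_tcost_glueE sum_tcostE mulr_sumr; apply: ler_sum => z _.
have S1_ge0 : 0 <= S1 z.
  by apply: sumr_ge0 => i _; apply: sumr_ge0 => k _; rewrite mulr_ge0 ?exprn_ge0 ?enorm_ge0.
have [nu0|nu_neq0] := eqVneq (dw nu z) 0; first by rewrite nu0 invr0 mul0r mulr_ge0.
have nu_gt0 : 0 < dw nu z.
  by rewrite lt_def nu_neq0 -sum_beta; apply: sumr_ge0 => i _; exact: sumr_ge0.
rewrite mulrC ler_pdivrMr // mulrAC.
have := sum_pairs_distX_le (fun t : {i : I & dI (mus i)} => beta z (tag t) (tagged t))
  (fun t => dx (mus (tag t)) (tagged t)) (dx nu z) (fun t => beta_ge0 z _ _) p hp.
rewrite (sum_tagged (beta z)) sum_beta.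
rewrite (sum_tagged (fun i k => beta z i k * enorm (dx nu z - dx (mus i) k) ^+ p)).
under eq_bigr => s _ do rewrite (sum_tagged (fun j l => beta z (tag s) (tagged s) *
  beta z j l * enorm (dx (mus (tag s)) (tagged s) - dx (mus j) l) ^+ p)).
by rewrite (sum_tagged (fun i k => \sum_j \sum_l beta z i k * beta z j l *
  enorm (dx (mus i) k - dx (mus j) l) ^+ p)).
Qed.

End GluedCost.

Section PairSums.
Context {R : realDomainType} {N : nat}.
Implicit Type T : 'I_N -> 'I_N -> R.

Lemma sum_lt_pairs_le_half T :
  (forall i j, 0 <= T i j) -> (forall i j, T i j = T j i) ->
  2 * \sum_(i < N) \sum_(j < N | (i < j)%N) T i j <= \sum_i \sum_j T i j.
Proof.
move=> T_ge0 T_sym.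
have lower_eq : \sum_(i < N) \sum_(j < N | (j < i)%N) T i j =
                \sum_(i < N) \sum_(j < N | (i < j)%N) T i j.
  rewrite (exchange_big_dep xpredT) //=; apply: eq_bigr => i _.
  by apply: eq_bigr => j _; rewrite T_sym.
have split_le : \sum_(i < N) \sum_(j < N | (i < j)%N) T i j +
                \sum_(i < N) \sum_(j < N | (j < i)%N) T i j <= \sum_i \sum_j T i j.
  rewrite -big_split /=; apply: ler_sum => i _.
  rewrite [leRHS](bigID (fun j : 'I_N => (i < j)%N)) /= lerD2l.
  rewrite (eq_bigl (fun j : 'I_N => ~~ (i < j)%N && (j < i)%N)); last first.
    by move=> j; case: ltngtP.
  rewrite [leRHS](bigID (fun j : 'I_N => (j < i)%N)) /= lerDl.
  by apply: sumr_ge0 => j _.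
rewrite lower_eq in split_le; rewrite mulr2n mulrDl mul1r; exact: split_le.
Qed.

Lemma sum_lt_pairs_eq0 T : (forall i j : 'I_N, (i < j)%N -> 0 <= T i j) ->
  \sum_(i < N) \sum_(j < N | (i < j)%N) T i j = 0 -> forall i j : 'I_N, (i < j)%N -> T i j = 0.
Proof.
move=> T_ge0 sum0 i j lt_ij.
have row_ge0 (i' : 'I_N) : true -> 0 <= \sum_(j' < N | (i' < j')%N) T i' j'.
  by move=> _; apply: sumr_ge0 => j'; exact: T_ge0.
exact: psumr_eq0P (T_ge0 i) (psumr_eq0P row_ge0 sum0 (i := i) isT) _ lt_ij.
Qed.

End PairSums.

Lemma sum_lt_pairs_Wpp_le_Psi {R : realType} {d N : nat} (p : nat) (lam : 'I_N -> R)
    (mus : 'I_N -> dmeas R d) (nu : dmeas R d) :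
  (p == 1)%N || (p == 2)%N -> (forall i, 0 <= lam i) -> \sum_(i < N) lam i = 1 ->
  (forall i, is_prob (mus i)) -> is_prob nu ->
  \sum_(i < N) \sum_(j < N | (i < j)%N) lam i * lam j * Wpp p (mus i) (mus j)
  <= Psi p lam mus nu.
Proof.
move=> hp lam_ge0 lam_sum1 mus_prob nu_prob; apply/ler_addgt0Pr => e e_gt0.
pose near_opt (i : 'I_N) := cid (Wpp_approx p _ _ e nu_prob (mus_prob i) e_gt0).
pose g i := sval (near_opt i).
have g_coupling i : coupling (g i) by have [] := svalP (near_opt i).
have g_cost i : tcost p (g i) <= Wpp p nu (mus i) + e by have [] := svalP (near_opt i).
have half := sum_lt_pairs_le_half (fun i j => lam i * lam j * Wpp p (mus i) (mus j))
  (fun i j => mulr_ge0 (mulr_ge0 (lam_ge0 i) (lam_ge0 j)) (Wpp_ge0 p _ _))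
  (fun i j => ltac:(by rewrite /= WppC [lam i * _]mulrC)).
have W_le_glue : \sum_i \sum_j lam i * lam j * Wpp p (mus i) (mus j) <=
    \sum_i \sum_j lam i * lam j * tcost p (glue (g i) (g j)).
  apply: ler_sum => i _; apply: ler_sum => j _; rewrite ler_wpM2l ?mulr_ge0 //.
  exact/Wpp_le/glue_coupling.
have glued := sum_tcost_glue_le hp lam_ge0 lam_sum1 g_coupling.
have cost_le : \sum_i lam i * tcost p (g i) <= Psi p lam mus nu + e.
  apply: (@le_trans _ _ (\sum_i lam i * (Wpp p nu (mus i) + e))).
    by apply: ler_sum => i _; rewrite ler_wpM2l.
  by under eq_bigr do rewrite mulrDr; rewrite big_split /= -mulr_suml lam_sum1 mul1r.
simpl in half; lra.
Qed.

Lemma sum_lt_pairs_Wpp_gt0 {R : realType} {d N : nat} (p : nat) (lam : 'I_N -> R)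
    (mus : 'I_N -> dmeas R d) (pi : forall i j, dI (mus i) -> dI (mus j) -> R) :
  (forall i, 0 < lam i) ->
  (forall i j : 'I_N, (i < j)%N ->
     coupling (pi i j) /\ tcost p (pi i j) = Wpp p (mus i) (mus j)) ->
  (exists i j, ~ meas_eq (mus i) (mus j)) ->
  0 < \sum_(i < N) \sum_(j < N | (i < j)%N) lam i * lam j * Wpp p (mus i) (mus j).
Proof.
move=> lam_gt0 pi_opt [i [j neq_ij]].
have pair_ge0 i' j' : 0 <= lam i' * lam j' * Wpp p (mus i') (mus j').
  by rewrite !mulr_ge0 ?Wpp_ge0 ?ltW.
rewrite lt_def sumr_ge0 ?andbT => [|i' _]; last exact: sumr_ge0.
apply/eqP => sum0; apply: neq_ij.
have meq (i' j' : 'I_N) : (i' < j')%N -> meas_eq (mus i') (mus j').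
  move=> lt_ij; have [pi_coupling pi_cost] := pi_opt i' j' lt_ij.
  apply: (tcost_eq0_meas_eq p _ _ _ pi_coupling).
  move: (sum_lt_pairs_eq0 _ (fun i j _ => pair_ge0 i j) sum0 _ _ lt_ij) => /eqP.
  by rewrite pi_cost !mulf_eq0 !(gt_eqF (lam_gt0 _)) /= => /eqP.
by case: (ltngtP i j) => [/meq|/meq eq_ji y|/val_inj ->] //; rewrite eq_ji.
Qed.

Section Mixture.
Context {R : realType} {d N : nat} {n : 'I_N -> nat}.
Variables (lam : 'I_N -> R) (w : forall i, 'I_(n i) -> R) (m : forall i, 'I_(n i) -> 'rV[R]_d).
Hypotheses (lam_ge0 : forall i, 0 <= lam i) (lam_sum1 : \sum_(i < N) lam i = 1).

Definition mix_plan {nu : dmeas R d} (g : forall i, 'I_(n i) -> dI nu -> R) :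
    dI (mixmeas lam w m) -> dI nu -> R :=
  fun t l => lam (tag t) * g (tag t) (tagged t) l.

Lemma mix_plan_coupling nu (g : forall i, 'I_(n i) -> dI nu -> R) :
  (forall i, coupling (mu := mkmu w m i) (g i)) -> coupling (mix_plan g).
Proof.
move=> g_coupling; split; last split.
- by move=> t l; rewrite mulr_ge0 //; have [g_ge0 _] := g_coupling (tag t).
- by move=> t; rewrite -mulr_sumr; have [_ [-> _]] := g_coupling (tag t).
- move=> l; rewrite (sum_tagged (fun i k => lam i * g i k l)).
  transitivity (\sum_i lam i * dw nu l); last by rewrite -mulr_suml lam_sum1 mul1r.
  by apply: eq_bigr => i _; rewrite -mulr_sumr; have [_ [_ ->]] := g_coupling i.
Qed.

Lemma tcost_mix_plan p nu (g : forall i, 'I_(n i) -> dI nu -> R) :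
  tcost p (mix_plan g) = \sum_i lam i * tcost p (mu := mkmu w m i) (g i).
Proof.
rewrite /tcost (sum_tagged (fun i k => \sum_l lam i * g i k l *
  enorm (m i k - dx nu l) ^+ p)).
apply: eq_bigr => i _; rewrite mulr_sumr; apply: eq_bigr => k _.
by rewrite mulr_sumr; apply: eq_bigr => l _; rewrite mulrA.
Qed.

Lemma Psi_mix_le p (mus : 'I_N -> dmeas R d)
    (pi : forall i j, 'I_(n i) -> dI (mus j) -> R) :
  (forall i j, coupling (mu := mkmu w m i) (pi i j)) ->
  Psi p lam mus (mixmeas lam w m) <=
  \sum_i lam i * \sum_j lam j * tcost p (mu := mkmu w m i) (pi i j).
Proof.
move=> pi_coupling.
have -> : \sum_i lam i * \sum_j lam j * tcost p (mu := mkmu w m i) (pi i j) =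
    \sum_j lam j * tcost p (mix_plan (fun i => pi i j)).
  under eq_bigr do rewrite mulr_sumr; rewrite exchange_big; apply: eq_bigr => j _.
  by rewrite tcost_mix_plan mulr_sumr; apply: eq_bigr => i _; rewrite mulrCA.
apply: ler_sum => j _; rewrite ler_wpM2l //.
by apply/Wpp_le/mix_plan_coupling => i; exact: pi_coupling.
Qed.

End Mixture.

Lemma ler_ratio {R : numFieldType} (a b c e : R) :
  0 <= a -> a <= b -> 0 < c -> c <= e -> a / e <= b / c.
Proof.
move=> a_ge0 le_ab c_gt0 le_ce; have e_gt0 := lt_le_trans c_gt0 le_ce.
have inv_ge0 : 0 <= e^-1 by rewrite invr_ge0 ltW.
apply: (le_trans (ler_wpM2r inv_ge0 le_ab)).
by rewrite ler_wpM2l ?(le_trans a_ge0) // lef_pV2 ?posrE.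
Qed.

Theorem mainTheorem6 (R : realType) (d N p : nat)
  (hp : (p == 1)%N || (p == 2)%N) (hN : (2 <= N)%N)
  (lam : 'I_N -> R) (hlam_pos : forall i, 0 < lam i)
  (hlam_sum : \sum_(i < N) lam i = 1)
  (n : 'I_N -> nat)
  (w : forall i, 'I_(n i) -> R) (x : forall i, 'I_(n i) -> 'rV[R]_d)
  (hw_pos : forall i k, 0 < w i k)
  (hw_sum : forall i, \sum_(k < n i) w i k = 1)
  (hx_inj : forall i, injective (x i))
  (hneq : exists i j, ~ meas_eq (mkmu w x i) (mkmu w x j))
  (pi : forall i j : 'I_N, 'I_(n i) -> 'I_(n j) -> R)
  (hpi_diag : forall i (k l : 'I_(n i)), pi i i k l = if k == l then w i k else 0)
  (hpi_opt : forall i j : 'I_N, (i < j)%N ->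
      @coupling R d (mkmu w x i) (mkmu w x j) (pi i j) /\
      @tcost R d p (mkmu w x i) (mkmu w x j) (pi i j) = Wpp p (mkmu w x i) (mkmu w x j))
  (hpi_sym : forall (i j : 'I_N) (k : 'I_(n i)) (l : 'I_(n j)), pi j i l k = pi i j k l)
  (m : forall i, 'I_(n i) -> 'rV[R]_d)
  (nuhat : dmeas R d)
  (hnuhat : is_prob nuhat /\
     forall nu : dmeas R d, is_prob nu ->
       Psi p lam (mkmu w x) nuhat <= Psi p lam (mkmu w x) nu) :
  Psi p lam (mkmu w x) (mixmeas lam w m) / Psi p lam (mkmu w x) nuhat
  <= (\sum_(i < N) lam i * \sum_(j < N) lam j *
        \sum_(k < n i) \sum_(l < n j) pi i j k l * enorm (m i k - x j l) ^+ p)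
     / (\sum_(i < N) \sum_(j < N | (i < j)%N) lam i * lam j * Wpp p (mkmu w x i) (mkmu w x j)).
Proof.
have lam_ge0 i := ltW (hlam_pos i).
have mu_prob i : is_prob (mkmu w x i).
  by split; [move=> k; exact: ltW (hw_pos i k) | exact: hw_sum].
have pi_coupling i j : coupling (mu := mkmu w x i) (nu := mkmu w x j) (pi i j).
  case: (ltngtP i j) => [lt_ij|lt_ji|/val_inj eq_ij]; first by have [] := hpi_opt i j lt_ij.
  - have [/coupling_tr pi_ji _] := hpi_opt j i lt_ji.
    suff -> : pi i j = fun k l => pi j i l k by [].
    by apply/funext => k; apply/funext => l; rewrite hpi_sym.
  - subst j; have -> : pi i i = fun k l => if k == l then w i k else 0.
      by apply/funext => k; apply/funext => l; exact: hpi_diag.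
    by apply: coupling_diag => k; exact: ltW (hw_pos i k).
have D_gt0 := sum_lt_pairs_Wpp_gt0 p lam (mkmu w x) pi hlam_pos hpi_opt hneq.
apply: ler_ratio D_gt0 _.
- by apply: sumr_ge0 => i _; rewrite mulr_ge0 ?Wpp_ge0.
- exact: (Psi_mix_le lam w m lam_ge0 hlam_sum p (mkmu w x) pi pi_coupling).
- exact: sum_lt_pairs_Wpp_le_Psi hp lam_ge0 hlam_sum mu_prob hnuhat.1.
Qed.
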